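(* Let $G(A,B)$ be a matching-covered bipartite graph. Then $G(A,B)$ has an equivalent class if and only if $G(A,B)$ has a 2-edge-cut which separates $G(A,B)$ into two balanced components.
   Context: A matching-covered graph is a connected graph with a perfect matching in which every edge lies in some perfect matching. Two edges of a matching-covered graph $G$ are equivalent if every perfect matching of $G$ either contains both of them or contains neither. An equivalent class of $G$ is a set $K\subseteq E(G)$ with at least two edges such that any two edges of $K$ are equivalent. A 2-edge-cut separating $G$ into two components is a set $S$ of two edges such that $G\setminus S$ has exactly two components and $S$ consists of the edges between them. A bipartite component with bipartition $(A',B')$ is balanced if $|A'|=|B'|$. *)

(* Finite simple graphs on a finType T given by a
   symmetric irreflexive relation e; edges are 2-element vertex sets. *)
From mathcomp Require Import all_boot.
Set Implicit Arguments. Unset Strict Implicit. Unset Printing Implicit Defensive.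

Section Graphs.
Variable T : finType.

Definition simple_graph (e : rel T) : Prop := symmetric e /\ irreflexive e.

Definition edges (e : rel T) : {set {set T}} :=
  [set [set x; y] | x in T, y in T & e x y].

Definition connected_graph (e : rel T) : Prop := forall x y : T, connect e x y.

Definition perfect_matching (e : rel T) (M : {set {set T}}) : Prop :=
  M \subset edges e /\ forall v : T, #|[set f in M | v \in f]| = 1.

Definition matching_covered (e : rel T) : Prop :=
  connected_graph e /\ (exists M, perfect_matching e M) /\
  forall f, f \in edges e -> exists M, perfect_matching e M /\ f \in M.

Definition bipartite_with (e : rel T) (A : {set T}) : Prop :=
  forall x y, e x y -> (x \in A) != (y \in A).

Definition equivalent_edges (e : rel T) (f g : {set T}) : Prop :=
  forall M, perfect_matching e M -> (f \in M) = (g \in M).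

Definition equivalent_class (e : rel T) (K : {set {set T}}) : Prop :=
  K \subset edges e /\ 2 <= #|K| /\
  forall f g, f \in K -> g \in K -> equivalent_edges e f g.

Definition delete_edges (e : rel T) (S : {set {set T}}) : rel T :=
  fun x y => e x y && ([set x; y] \notin S).

Definition cut_edges (e : rel T) (X : {set T}) : {set {set T}} :=
  [set f in edges e | [exists x in X, exists y in ~: X, f == [set x; y]]].

Definition two_edge_cut_sep (e : rel T) (S : {set {set T}}) (X : {set T}) : Prop :=
  S \subset edges e /\ #|S| = 2 /\
  X != set0 /\ ~: X != set0 /\
  (forall x y, connect (delete_edges e S) x y <-> ((x \in X) = (y \in X))) /\
  S = cut_edges e X.

Definition balanced (A C : {set T}) : Prop := #|C :&: A| = #|C :&: ~: A|.

End Graphs.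

(* For a perfect matching q, call v in X an exit of X if q v is
   not in X.  The other vertices of X are paired by q across the bipartition,
   so #(A-exits) - #(B-exits) = #(X :&: A) - #(X :&: ~: A).
   If S = {f, g} is the cut of a balanced X, a perfect matching containing
   exactly one of f, g would give X a single exit, which is impossible.
   Conversely, let f = {a1, p a1} and g = {a2, p a2} be equivalent edges of a
   perfect matching p, with a1, a2 in A, and let X be the set of vertices
   reachable from a1 by p-alternating paths that never enter a1 or a2.  If p a1
   were in X, flipping p along the resulting alternating cycle through f
   would give a perfect matching containing g but not f.  Counting exits for p
   and for a perfect matching avoiding f shows that X is balanced and contains
   p a2; counting them for a perfect matching through an edge leaving X shows
   that f and g are the only edges leaving X.  The set built in the same way
   from a2 covers the complement of X, so both sides are connected in G - S. *)

From mathcomp Require Import all_boot zify.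
Set Implicit Arguments. Unset Strict Implicit. Unset Printing Implicit Defensive.

Section Graph.
Variables (T : finType) (e : rel T).
Hypothesis sym_e : symmetric e.

Lemma set2_eq (a b c d : T) :
  [set a; b] = [set c; d] -> (a = c /\ b = d) \/ (a = d /\ b = c).
Proof.
move=> E.
have ha : a \in [set c; d] by rewrite -E set21.
have hb : b \in [set c; d] by rewrite -E set22.
have hc : c \in [set a; b] by rewrite E set21.
have hd : d \in [set a; b] by rewrite E set22.
case/set2P: ha => ha; case/set2P: hb => hb; subst; auto;
  by case/set2P: hc => hc; case/set2P: hd => hd; subst; auto.
Qed.

Lemma edges_set2 x y : e x y -> [set x; y] \in edges e.
Proof. by move=> exy; apply/imset2P; exists x y; rewrite ?inE. Qed.

Lemma edgesP f : f \in edges e -> exists x y, e x y /\ f = [set x; y].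
Proof. by case/imset2P => x y _; rewrite inE => exy ->; exists x, y. Qed.

Lemma edges_rel x y : [set x; y] \in edges e -> e x y.
Proof.
case/edgesP => u [v [euv /set2_eq]].
by case=> -[-> ->] //; rewrite sym_e.
Qed.

Lemma mem_cut_edges X u v :
  e u v -> ([set u; v] \in cut_edges e X) = ((u \in X) != (v \in X)).
Proof.
move=> euv; rewrite inE edges_set2 //=; apply/existsP/idP.
  case=> x /andP[xX /existsP[y /andP[]]]; rewrite inE => yX /eqP/set2_eq.
  by case=> -[-> ->]; rewrite ?xX ?(negbTE yX).
case uX: (u \in X) => /=; rewrite ?negbK => vX.
  by exists u; rewrite uX; apply/existsP; exists v; rewrite inE vX /=.
by exists v; rewrite vX; apply/existsP; exists u; rewrite inE uX setUC /=.
Qed.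

Lemma closed_connected (Z : {set T}) x y : connected_graph e ->
  (forall u v, e u v -> u \in Z -> v \in Z) -> x \in Z -> y \in Z.
Proof.
move=> conn clZ; rewrite -(closed_connect _ (conn x y)) // => u v euv.
by apply/idP/idP; apply: clZ; rewrite // sym_e.
Qed.

Lemma two_edge_cut_sepI (S : {set {set T}}) (X : {set T}) x y :
  S \subset edges e -> #|S| = 2 -> S = cut_edges e X -> x \in X -> y \notin X ->
  (forall v, v \in X -> connect (delete_edges e S) x v) ->
  (forall v, v \notin X -> connect (delete_edges e S) y v) ->
  two_edge_cut_sep e S X.
Proof.
move=> Ssub S2 Scut xX yX connX connY.
have sym_del : connect_sym (delete_edges e S).
  by apply: sym_connect_sym => u v; rewrite /delete_edges sym_e setUC.
have closedX : closed (delete_edges e S) (mem X).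
  by move=> u v /andP[euv]; rewrite Scut mem_cut_edges // negbK => /eqP.
split=> //; split=> //; split; first by apply/set0Pn; exists x.
split; first by apply/set0Pn; exists y; rewrite inE.
split=> // u v; split; first exact: closed_connect.
case uX: (u \in X) => /esym vX.
  by apply: connect_trans (connX _ vX); rewrite sym_del; apply: connX.
by apply: connect_trans (connY _ (negbT vX)); rewrite sym_del; apply: connY; rewrite uX.
Qed.

Lemma setC_subset_cover (S : {set {set T}}) (X Y : {set T}) x :
  connected_graph e -> x \in X ->
  (forall u v, e u v -> u \in X -> v \notin X -> [set u; v] \in S) ->
  (forall u v, e u v -> u \in Y -> v \notin Y -> [set u; v] \in S) ->
  (forall f, f \in S -> f \subset X :|: Y) -> ~: X \subset Y.
Proof.
move=> conn xX cutX cutY coverS.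
have cover v : v \in X :|: Y.
  apply: (@closed_connected _ x v conn); last by rewrite in_setU xX.
  move=> u w euw; rewrite in_setU => /orP[uX | uY].
    case wX: (w \in X); first by rewrite in_setU wX.
    by apply: (subsetP (coverS _ (cutX _ _ euw uX (negbT wX)))); rewrite set22.
  case wY: (w \in Y); first by rewrite in_setU wY orbT.
  by apply: (subsetP (coverS _ (cutY _ _ euw uY (negbT wY)))); rewrite set22.
by apply/subsetP => v; rewrite inE => /negbTE vX; have := cover v; rewrite in_setU vX.
Qed.

Lemma connect_last (R : rel T) x y : connect R x y -> x != y ->
  exists2 u, connect R x u & R u y.
Proof.
case/connectP => s; elim/last_ind: s => [|s z _] /=; first by move=> _ ->; rewrite eqxx.
rewrite rcons_path last_rcons => /andP[ps Rz] -> _.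
by exists (last x s) => //; apply/connectP; exists s.
Qed.

Definition perfect_involution (q : T -> T) := involutive q /\ forall v, e v (q v).

Definition matching_of (q : T -> T) : {set {set T}} := [set [set v; q v] | v : T].

Lemma mem_matching_of q u v :
  involutive q -> ([set u; v] \in matching_of q) = (v == q u).
Proof.
move=> qK; apply/imsetP/eqP => [[x _ /set2_eq[][-> ->] //]|->]; last by exists u.
Qed.

Lemma matching_ofP q : perfect_involution q -> perfect_matching e (matching_of q).
Proof.
case=> qK qe; split.
  by apply/subsetP => f /imsetP[x _ ->]; apply: edges_set2.
move=> v; apply/eqP/cards1P; exists [set v; q v]; apply/setP => f.
rewrite !inE; apply/andP/eqP => [[/imsetP[x _ ->]]|->]; last first.
  by rewrite set21 mem_matching_of ?eqxx.
by case/set2P=> ->; rewrite // qK setUC.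
Qed.

Lemma perfect_matchingP M :
  perfect_matching e M -> exists2 q, perfect_involution q & M = matching_of q.
Proof.
case=> sub card1.
have incident v : exists w, [set v; w] \in M.
  have /eqP/cards1P[f fE] := card1 v.
  have : f \in [set f0 in M | v \in f0] by rewrite fE set11.
  rewrite inE => /andP[fM vf].
  have /edgesP[x [y [_ fxy]]] := subsetP sub _ fM; subst f.
  by case/set2P: vf => ->; [exists y | exists x; rewrite setUC].
have uniq_incident v w w' : [set v; w] \in M -> [set v; w'] \in M -> w = w'.
  move=> vw vw'; have /eqP/cards1P[f fE] := card1 v.
  have : [set v; w] \in [set f0 in M | v \in f0] by rewrite inE vw set21.
  have : [set v; w'] \in [set f0 in M | v \in f0] by rewrite inE vw' set21.
  rewrite fE !inE => /eqP E' /eqP E.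
  by case/set2_eq: (etrans E (esym E')) => -[] // -> ->.
pose q v := odflt v [pick w | [set v; w] \in M].
have qM v : [set v; q v] \in M.
  by rewrite /q; case: pickP => [//|none]; case: (incident v) => w; rewrite none.
have qK : involutive q.
  by move=> v; apply: (uniq_incident (q v)); rewrite // setUC.
exists q; first by split=> // v; apply: edges_rel; apply: (subsetP sub).
apply/setP => f; apply/idP/imsetP => [fM|[v _ ->] //].
have /edgesP[x [y [_ fxy]]] := subsetP sub _ fM; subst f.
by exists x; rewrite // (uniq_incident x y (q x)).
Qed.

Section Bipartite.
Variable A : {set T}.
Hypothesis bip : bipartite_with e A.

Lemma bipartite_side u v : e u v -> (v \in A) = (u \notin A).
Proof. by move/bip; case: (u \in A); case: (v \in A). Qed.

Definition exits (q : T -> T) (X : {set T}) : {set T} := [set v in X | q v \notin X].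

Lemma mem_exits q X v : (v \in exits q X) = (v \in X) && (q v \notin X).
Proof. by rewrite inE. Qed.

Lemma exits_balance q X : perfect_involution q ->
  #|exits q X :&: A| + #|X :&: ~: A| = #|exits q X :&: ~: A| + #|X :&: A|.
Proof.
case=> qK qe; pose inner := [set v in X | q v \in X].
have splitX B : #|X :&: B| = #|exits q X :&: B| + #|inner :&: B|.
  rewrite -(cardsID inner (X :&: B)) [LHS]addnC; congr (_ + _); apply: eq_card => v;
  by rewrite !inE; case: (v \in X); case: (q v \in X); case: (v \in B).
have inner_swap : q @: (inner :&: A) = inner :&: ~: A.
  apply/setP => v; rewrite inE; apply/imsetP/idP => [[u]|].
    rewrite !inE => /andP[/andP[uX quX] uA] ->.
    by rewrite qK uX quX (bipartite_side (qe u)) uA.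
  rewrite !inE => /andP[/andP[vX qvX] vA]; exists (q v); last by rewrite qK.
  by rewrite !inE qK vX qvX (bipartite_side (qe v)) vA.
rewrite !splitX -inner_swap card_imset; last exact: can_inj qK.
lia.
Qed.

Lemma balanced_exits q X : perfect_involution q -> balanced A X ->
  #|exits q X :&: A| = #|exits q X :&: ~: A|.
Proof. by move=> /(exits_balance X); rewrite /balanced => + bal; rewrite bal; lia. Qed.

Lemma balanced_exits_even q X : perfect_involution q -> balanced A X ->
  ~~ odd #|exits q X|.
Proof.
by move=> hq bal; rewrite -(cardsID A) (balanced_exits hq bal) setDE addnn odd_double.
Qed.

Lemma balanced_setC X : (exists q, perfect_involution q) ->
  balanced A X -> balanced A (~: X).
Proof.
case=> q /(exits_balance setT).
have -> : exits q setT = set0 by apply/setP => v; rewrite !inE.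
rewrite /balanced !set0I !setTI !cards0 /= => balT bal.
rewrite setIC [~: X :&: ~: A]setIC -!setDE.
have := cardsID X A; have := cardsID X (~: A).
by rewrite [A :&: X]setIC [~: A :&: X]setIC; lia.
Qed.

Lemma matching_of_orient p f : perfect_involution p -> f \in matching_of p ->
  exists2 a, a \in A & f = [set a; p a].
Proof.
case=> pK pe /imsetP[v _ ->]; case vA: (v \in A); first by exists v.
by exists (p v); rewrite ?(bipartite_side (pe v)) ?vA // pK setUC.
Qed.

Lemma balanced_cut_equivalent S X :
  two_edge_cut_sep e S X -> balanced A X -> equivalent_class e S.
Proof.
case=> Ssub [S2 [_ [_ [_ Scut]]]] bal; split=> //; split; first by rewrite S2.
suff one_way f g M : f \in S -> g \in S -> perfect_matching e M -> f \in M -> g \in M.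
  by move=> f g fS gS M pmM; apply/idP/idP; apply: one_way.
move=> fS gS pmM fM; case: (eqVneq f g) => [<- //|fg]; apply/negPn/negP => gM.
have [q [qK qe] ME] := perfect_matchingP pmM; subst M.
have SE : S = [set f; g].
  apply/eqP; rewrite eq_sym eqEcard S2 cards2 fg andbT.
  by apply/subsetP => h /set2P[] ->.
move: (fS); rewrite Scut inE => /andP[_ /existsP[x /andP[xX /existsP[y /andP[]]]]].
rewrite inE => yX /eqP fxy.
suff exits1 : exits q X = [set x].
  by have := balanced_exits_even (conj qK qe) bal; rewrite exits1 cards1.
apply/setP => v; rewrite !inE; apply/andP/eqP => [[vX qvX]|->].
  have : [set v; q v] \in S by rewrite Scut mem_cut_edges // vX qvX.
  rewrite SE !inE => /orP[] /eqP E.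
    by case/set2_eq: (etrans E fxy) => -[vy _] //; rewrite -vy vX in yX.
  by move: gM; rewrite -E mem_matching_of ?eqxx.
by move: fM; rewrite fxy mem_matching_of // => /eqP <-.
Qed.

Section MatchingCovered.
Hypothesis conn : connected_graph e.
Hypothesis mc : forall f, f \in edges e -> exists M, perfect_matching e M /\ f \in M.

Lemma matched_involution u v : e u v -> exists2 q, perfect_involution q & q u = v.
Proof.
move=> euv; have [M [pmM uvM]] := mc (edges_set2 euv).
have [q [qK qe] ME] := perfect_matchingP pmM.
by exists q => //; move: uvM; rewrite ME mem_matching_of // => /eqP.
Qed.

Lemma avoiding_involution p v w : perfect_involution p ->
  w \notin [set v; p v] -> exists2 q, perfect_involution q & q v != p v.
Proof.
case=> pK _ wZ; set Z := [set v; p v] in wZ.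
have [[x y] /= /and3P[exy xZ yZ] | closedZ] :=
  pickP [pred xy : T * T | [&& e xy.1 xy.2, xy.1 \in Z & xy.2 \notin Z]].
  have [q [qK qe] qxy] := matched_involution exy; exists q => //.
  move: yZ xZ; rewrite !inE -qxy negb_or => /andP[nv np] /orP[] /eqP xE.
    by rewrite xE in np.
  by apply: contra nv => /eqP qv; rewrite xE -qv qK.
case/negP: wZ; apply: (@closed_connected Z v w conn); last by rewrite set21.
by move=> x y exy xZ; have := closedZ (x, y); rewrite /= exy xZ => /negbFE.
Qed.

Section Alternating.
Variable p : T -> T.
Hypothesis hp : perfect_involution p.

Definition alt u v := e u v && (if u \in A then v != p u else v == p u).

Lemma alt_side u v : alt u v -> (v \in A) = (u \notin A).
Proof. by case/andP => /bipartite_side. Qed.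

Lemma alt_unmatched u v : alt u v -> u \in A -> v != p u.
Proof. by case/andP => _ + uA; rewrite uA. Qed.

Lemma alt_matched u v : alt u v -> u \notin A -> v = p u.
Proof. by case/andP => _ + /negbTE uA; rewrite uA => /eqP. Qed.

(* p with the matching edges of the alternating cycle c traded for its other edges *)
Definition swap_along (c : seq T) v :=
  if v \in c then (if v \in A then next c v else prev c v) else p v.

Lemma swap_along_perfect c : uniq c -> cycle alt c ->
  perfect_involution (swap_along c).
Proof.
move=> uc cyc; have [pK pe] := hp.
have alt_next v : v \in c -> alt v (next c v) by apply: next_cycle.
have alt_prev v : v \in c -> alt (prev c v) v by apply: prev_cycle.
split=> v; rewrite /swap_along; case vc: (v \in c).
- case vA: (v \in A).
    by rewrite mem_next vc (alt_side (alt_next _ vc)) vA prev_next.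
  by rewrite mem_prev vc -[_ \in A]negbK -(alt_side (alt_prev _ vc)) vA next_prev.
- have pvc : p v \notin c.
    apply/negP => pvc; case/negP: vc; case pvA: (p v \in A).
      have pvA' : prev c (p v) \notin A by rewrite -(alt_side (alt_prev _ pvc)) pvA.
      by move: (alt_matched (alt_prev _ pvc) pvA') => /(can_inj pK) ->; rewrite mem_prev.
    by move: (alt_matched (alt_next _ pvc) (negbT pvA)); rewrite pK => <-; rewrite mem_next.
  by rewrite (negbTE pvc) pK.
- by case: (v \in A); [case/andP: (alt_next _ vc) | rewrite sym_e; case/andP: (alt_prev _ vc)].
- exact: pe.
Qed.

Variables a1 a2 : T.
Hypotheses (a1A : a1 \in A) (a2A : a2 \in A) (a12 : a1 != a2).
Hypothesis eqv : forall q, perfect_involution q -> (q a1 == p a1) = (q a2 == p a2).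

Definition step u v := [&& alt u v, v != a1 & v != a2].

Definition reach := [set v | connect step a1 v].

Lemma partner_a1_notin_reach : p a1 \notin reach.
Proof.
have [pK pe] := hp; rewrite inE; apply/negP => /connectP[s ps].
case: (shortenP ps) => s' ps' us' _ lst.
have a2s' : a2 \notin s'.
  rewrite -has_pred1 -all_predC; elim: s' (a1) ps' {us' lst} => //= z t IH x.
  by case/andP=> /and3P[_ _ za2] /IH ->; rewrite andbT.
have cyc : cycle alt (a1 :: s').
  rewrite /= rcons_path -lst; apply/andP; split; first by apply: sub_path ps' => u v /and3P[].
  by rewrite /alt sym_e pe (bipartite_side (pe a1)) a1A pK eqxx.
have := eqv (swap_along_perfect us' cyc).
rewrite /swap_along mem_head a1A (negbTE (alt_unmatched (next_cycle cyc (mem_head _ _)) a1A)).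
by rewrite inE (negbTE a2s') [a2 == a1]eq_sym (negbTE a12) eqxx.
Qed.

Lemma a1_in_reach : a1 \in reach.
Proof. by rewrite inE connect0. Qed.

Lemma a2_notin_reach : a2 \notin reach.
Proof. by rewrite inE; apply/negP => /connect_last/(_ a12)[u _ /and3P[_ _]]; rewrite eqxx. Qed.

Lemma reach_step u v : u \in reach -> step u v -> v \in reach.
Proof. by rewrite !inE => ru /connect1; apply: connect_trans. Qed.

Lemma reach_partnerA a : a \in reach -> a \in A -> a != a1 -> p a \in reach.
Proof.
move=> ra aA aa1; move: (ra); rewrite inE => /connect_last.
rewrite eq_sym => /(_ aa1)[u ru /and3P[ua _ _]].
have uA : u \notin A by rewrite -(alt_side ua) aA.
by rewrite (alt_matched ua uA) (proj1 hp) inE.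
Qed.

Lemma reach_partnerB b : b \in reach -> b \notin A -> b != p a2 -> p b \in reach.
Proof.
have [pK pe] := hp; move=> rb bA bpa2; apply: (reach_step rb).
rewrite /step /alt pe (negbTE bA) eqxx; apply/and3P; split=> //.
  by apply: contraNneq partner_a1_notin_reach => <-; rewrite pK.
by apply: contra bpa2 => /eqP <-; rewrite pK.
Qed.

Lemma reach_neighbour a w : a \in reach -> a \in A -> e a w -> w != p a -> w \in reach.
Proof.
move=> ra aA eaw wpa; apply: (reach_step ra).
have wA : w \notin A by rewrite (bipartite_side eaw) aA.
by rewrite /step /alt eaw aA wpa; apply/and3P; split=> //; apply: contraNneq wA => ->.
Qed.

Lemma card_exitsA_reach q : perfect_involution q ->
  #|exits q reach :&: A| = (q a1 == p a1).
Proof.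
case=> _ qe; suff -> : exits q reach :&: A = if q a1 == p a1 then [set a1] else set0.
  by case: ifP; rewrite ?cards1 ?cards0.
apply/setP => a; rewrite in_setI mem_exits; apply/idP/idP.
  case/andP=> /andP[ra qra] aA.
  have qa : q a = p a by apply/eqP; apply: contraNT qra => /(reach_neighbour ra aA (qe a)).
  have aa1 : a = a1 by apply/eqP; apply: contraNT qra; rewrite qa => /(reach_partnerA ra aA).
  by rewrite -aa1 qa eqxx set11.
case: ifP => [/eqP qa1 /set1P ->|]; last by rewrite inE.
by rewrite a1_in_reach qa1 partner_a1_notin_reach a1A.
Qed.

Lemma exitsB_reach_sub : exits p reach :&: ~: A \subset [set p a2].
Proof.
apply/subsetP => b; rewrite in_setI mem_exits in_setC inE => /andP[/andP[rb prb] bA].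
by apply: contraNT prb => /(reach_partnerB rb bA).
Qed.

Lemma reach_balanced : balanced A reach.
Proof.
have a2_out : a2 \notin [set a1; p a1].
  rewrite !inE eq_sym (negbTE a12) /=.
  by apply: contraTneq a2A => ->; rewrite (bipartite_side ((proj2 hp) a1)) a1A.
have [q0 hq0 q0a1] := avoiding_involution hp a2_out.
have := exits_balance reach hq0; rewrite card_exitsA_reach // (negbTE q0a1).
have := exits_balance reach hp; rewrite card_exitsA_reach // eqxx.
have := subset_leq_card exitsB_reach_sub; rewrite cards1 /balanced; lia.
Qed.

Lemma partner_a2_in_reach : p a2 \in reach.
Proof.
have card1 := balanced_exits hp reach_balanced; rewrite card_exitsA_reach // eqxx in card1.
have : exits p reach :&: ~: A == [set p a2] by rewrite eqEcard exitsB_reach_sub cards1 -card1.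
by move/eqP/setP/(_ (p a2)); rewrite set11 in_setI mem_exits => /andP[/andP[]].
Qed.

Lemma reach_cut u v : e u v -> u \in reach -> v \notin reach ->
  [set u; v] \in [set [set a1; p a1]; [set a2; p a2]].
Proof.
move=> euv ru rv; case uA: (u \in A).
  have vpu : v = p u by apply/eqP; apply: contraNT rv => /(reach_neighbour ru uA euv).
  have ua1 : u = a1.
    by apply/eqP; apply: contraNT rv; rewrite vpu => /(reach_partnerA ru uA).
  by rewrite vpu ua1 set21.
have [q hq quv] := matched_involution euv.
have exitsAB := balanced_exits hq reach_balanced; rewrite card_exitsA_reach // in exitsAB.
have u_exit : u \in exits q reach :&: ~: A by rewrite in_setI mem_exits in_setC ru quv rv uA.
have qa1 : q a1 == p a1.
  apply: contraTT u_exit => /negbTE qa1; move: exitsAB; rewrite qa1 => /esym/card0_eq ->.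
  by rewrite inE.
have qa2 : q a2 == p a2 by rewrite -eqv.
have qpa2 : q (p a2) = a2 by rewrite -(eqP qa2) (proj1 hq).
have pa2_exit : p a2 \in exits q reach :&: ~: A.
  rewrite in_setI mem_exits in_setC partner_a2_in_reach qpa2 a2_notin_reach.
  by rewrite (bipartite_side ((proj2 hp) a2)) a2A.
move: exitsAB; rewrite qa1 => /esym/eqP/cards1P[x xE].
move: u_exit pa2_exit; rewrite xE !inE => /eqP ux /eqP pa2x.
by rewrite -quv ux -pa2x qpa2 setUC eqxx orbT.
Qed.

Lemma reach_connected v : v \in reach ->
  connect (delete_edges e [set [set a1; p a1]; [set a2; p a2]]) a1 v.
Proof.
rewrite inE; apply: connect_sub => x y /and3P[xy ya1 ya2]; apply: connect1.
rewrite /delete_edges (andP xy).1 /= in_set2 negb_or.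
apply/andP; split; apply/eqP => /set2_eq[][? ?]; subst.
- by case/eqP: (alt_unmatched xy a1A).
- by case/eqP: ya1.
- by case/eqP: (alt_unmatched xy a2A).
- by case/eqP: ya2.
Qed.

Lemma reach_cut_edges : [set [set a1; p a1]; [set a2; p a2]] = cut_edges e reach.
Proof.
have pe := proj2 hp; apply/setP => h; apply/set2P/idP => [[]->|].
- by rewrite mem_cut_edges // a1_in_reach (negbTE partner_a1_notin_reach).
- by rewrite mem_cut_edges // (negbTE a2_notin_reach) partner_a2_in_reach.
rewrite inE => /andP[/edgesP[x [y [exy ->]]] /existsP[u /andP[ur /existsP[v /andP[]]]]].
rewrite inE => vr /eqP/set2_eq[][? ?]; subst; apply/set2P.
  exact: reach_cut.
by rewrite setUC; apply: reach_cut; rewrite // sym_e.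
Qed.

End Alternating.

Lemma reach_setC p a1 a2 : perfect_involution p -> a1 \in A -> a2 \in A -> a1 != a2 ->
  (forall q, perfect_involution q -> (q a1 == p a1) = (q a2 == p a2)) ->
  ~: reach p a1 a2 \subset reach p a2 a1.
Proof.
move=> hp a1A a2A a12 eqv; have a21 : a2 != a1 by rewrite eq_sym.
have eqv' q : perfect_involution q -> (q a2 == p a2) = (q a1 == p a1).
  by move=> hq; rewrite (eqv q hq).
apply: (setC_subset_cover (S := [set [set a1; p a1]; [set a2; p a2]]) conn (a1_in_reach p a1 a2)).
- by move=> u v; apply: reach_cut.
- move=> u v euv ur vr; have := reach_cut hp a2A a1A a21 eqv' euv ur vr.
  by rewrite !in_set2 orbC.
move=> h /set2P[] -> /=; apply/subsetP => v /set2P[] ->; rewrite in_setU.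
- by rewrite a1_in_reach.
- by rewrite (partner_a2_in_reach hp a2A a1A a21 eqv') orbT.
- by rewrite (a1_in_reach p a2 a1) orbT.
- by rewrite (partner_a2_in_reach hp a1A a2A a12 eqv).
Qed.

Lemma equivalent_class_cut K : equivalent_class e K ->
  exists S X, two_edge_cut_sep e S X /\ balanced A X /\ balanced A (~: X).
Proof.
case=> Ksub [/card_gt1P[f [g [fK gK fg]]] Keq].
have [M [pmM fM]] := mc (subsetP Ksub _ fK).
have gM : g \in M by rewrite -(Keq _ _ fK gK _ pmM).
have [p hp ME] := perfect_matchingP pmM; subst M.
have [a1 a1A fE] := matching_of_orient hp fM.
have [a2 a2A gE] := matching_of_orient hp gM.
have a12 : a1 != a2 by apply: contraNneq fg => a12; rewrite fE gE a12.
have eqv q : perfect_involution q -> (q a1 == p a1) = (q a2 == p a2).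
  move=> hq; have qK := proj1 hq.
  by rewrite ![q _ == _]eq_sym -!mem_matching_of // -fE -gE (Keq _ _ fK gK _ (matching_ofP hq)).
have Scut : [set f; g] = cut_edges e (reach p a1 a2) by rewrite fE gE reach_cut_edges.
exists [set f; g], (reach p a1 a2); split; last first.
  have bal := reach_balanced hp a1A a2A a12 eqv.
  by split=> //; apply: balanced_setC bal; exists p.
apply: (two_edge_cut_sepI _ _ Scut (a1_in_reach p a1 a2) (a2_notin_reach p a12)).
- by apply/subsetP => h /set2P[] ->; apply: (subsetP Ksub).
- by rewrite cards2 fg.
- by move=> v; rewrite fE gE; apply: reach_connected.
move=> v; rewrite -in_setC => /(subsetP (reach_setC hp a1A a2A a12 eqv)).
by move/(reach_connected a2A a1A); rewrite setUC fE gE.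
Qed.

End MatchingCovered.
End Bipartite.
End Graph.

Theorem theorem5 (T : finType) (e : rel T) (A : {set T}) :
  simple_graph e -> bipartite_with e A -> matching_covered e ->
  (exists K : {set {set T}}, equivalent_class e K) <->
  (exists (S : {set {set T}}) (X : {set T}),
      two_edge_cut_sep e S X /\ balanced A X /\ balanced A (~: X)).
Proof.
move=> [sym_e _] bip [conn [_ mc]]; split.
  by case=> K; apply: equivalent_class_cut.
by case=> S [X [sepX [balX _]]]; exists S; apply: balanced_cut_equivalent sepX balX.
Qed.
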